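(* For all $n\ge 0$, the quadruples of statistics $(\operatorname{asc},\operatorname{des},\operatorname{MNA},\operatorname{MND})$ and $(\operatorname{des},\operatorname{asc},\operatorname{MND},\operatorname{MNA})$ are equidistributed on $S_n(213,231)$, i.e. $$\sum_{\pi\in S_n(213,231)} t_1^{\operatorname{asc}(\pi)}t_2^{\operatorname{des}(\pi)}t_3^{\operatorname{MNA}(\pi)}t_4^{\operatorname{MND}(\pi)}=\sum_{\pi\in S_n(213,231)} t_1^{\operatorname{des}(\pi)}t_2^{\operatorname{asc}(\pi)}t_3^{\operatorname{MND}(\pi)}t_4^{\operatorname{MNA}(\pi)}.$$
   Context: For $n\ge 0$, $S_n$ denotes the set of permutations $\pi=\pi_1\cdots\pi_n$ of $[n]=\{1,\dots,n\}$. $\pi$ avoids a pattern $\tau\in S_k$ if no subsequence $\pi_{i_1}\cdots\pi_{i_k}$ ($i_1<\dots<i_k$) satisfies $\pi_{i_a}<\pi_{i_b}\iff\tau_a<\tau_b$; $S_n(\tau,\rho)$ is the set of permutations in $S_n$ avoiding both $\tau$ and $\rho$. $\operatorname{asc}(\pi)$ (resp. $\operatorname{des}(\pi)$) is the number of $i\in[n-1]$ with $\pi_i<\pi_{i+1}$ (resp. $\pi_i>\pi_{i+1}$). $\operatorname{MNA}(\pi)$ is the maximum size of a set $I\subseteq[n-1]$ such that $\pi_i<\pi_{i+1}$ for all $i\in I$ and $|i-j|\ge 2$ for distinct $i,j\in I$; $\operatorname{MND}(\pi)$ is defined analogously with $\pi_i>\pi_{i+1}$. *)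

From mathcomp Require Import all_boot all_order all_algebra all_fingroup.
Set Implicit Arguments. Unset Strict Implicit. Unset Printing Implicit Defensive.

(* Values/positions are shifted
   by one relative to the paper, which does not affect any order statistic. *)

Definition oneline (n : nat) (p : 'S_n) : seq nat := [seq val (p i) | i <- enum 'I_n].

Definition contains (n : nat) (p : 'S_n) (tau : seq nat) : bool :=
  [exists f : {ffun 'I_(size tau) -> 'I_n},
     [forall a : 'I_(size tau), forall b : 'I_(size tau), (a < b) ==> (f a < f b)] &&
     [forall a : 'I_(size tau), forall b : 'I_(size tau),
        (p (f a) < p (f b)) == (nth 0 tau a < nth 0 tau b)]].

Definition avoids (n : nat) (p : 'S_n) (tau : seq nat) : bool := ~~ contains p tau.

Definition Av213_231 (n : nat) : {set 'S_n} :=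
  [set p : 'S_n | avoids p [:: 2; 1; 3] && avoids p [:: 2; 3; 1]].

Definition is_asc (n : nat) (p : 'S_n) (i : nat) : bool :=
  (i.+1 < n) && (nth 0 (oneline p) i < nth 0 (oneline p) i.+1).
Definition is_des (n : nat) (p : 'S_n) (i : nat) : bool :=
  (i.+1 < n) && (nth 0 (oneline p) i.+1 < nth 0 (oneline p) i).

Definition asc (n : nat) (p : 'S_n) : nat := count (is_asc p) (iota 0 n).
Definition des (n : nat) (p : 'S_n) : nat := count (is_des p) (iota 0 n).

Definition nonadj (n : nat) (P : nat -> bool) (I : {set 'I_n}) : bool :=
  [forall i in I, P i] &&
  [forall i in I, forall j in I, (i != j) ==> ((i.+1 < j) || (j.+1 < i))].

Definition MNA (n : nat) (p : 'S_n) : nat :=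
  \max_(I : {set 'I_n} | nonadj (is_asc p) I) #|I|.
Definition MND (n : nat) (p : 'S_n) : nat :=
  \max_(I : {set 'I_n} | nonadj (is_des p) I) #|I|.

From mathcomp Require Import all_boot all_order all_algebra all_fingroup.
From mathcomp Require Import zify.

(* Complementation pi_i |-> n + 1 - pi_i is an involution on S_n that reverses
   every comparison of values. Hence it exchanges ascents and descents
   position by position, so it swaps asc with des and MNA with MND, and an
   occurrence of a pattern in pi is an occurrence of the complementary pattern
   in its complement. As 213 and 231 are complements of each other,
   S_n(213,231) is stable under complementation, and reindexing the sum by it
   gives the identity. *)

Section Complement.
Variable n : nat.

Lemma perm_compl_inj (p : 'S_n) : injective (fun i => rev_ord (p i)).
Proof. by move=> i j /rev_ord_inj /perm_inj. Qed.

Definition perm_compl (p : 'S_n) : 'S_n := perm (@perm_compl_inj p).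

Lemma perm_complE p i : perm_compl p i = rev_ord (p i).
Proof. by rewrite permE. Qed.

Lemma perm_complK : involutive perm_compl.
Proof. by move=> p; apply/permP => i; rewrite !perm_complE rev_ordK. Qed.

Lemma ltn_perm_compl p (i j : 'I_n) :
  (perm_compl p i < perm_compl p j) = (p j < p i).
Proof.
rewrite !perm_complE /=; have := ltn_ord (p i); have := ltn_ord (p j).
case: ltnP => ?; case: ltnP => ?; lia.
Qed.

Lemma nth_oneline p i (lt_i_n : i < n) :
  nth 0 (oneline p) i = p (Ordinal lt_i_n).
Proof.
rewrite /oneline (nth_map (Ordinal lt_i_n)) ?size_enum_ord //.
by congr (val (p _)); apply: val_inj; rewrite /= nth_enum_ord.
Qed.

Lemma is_asc_compl p : is_asc (perm_compl p) =1 is_des p.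
Proof.
move=> i; rewrite /is_asc /is_des; case: (ltnP i.+1 n) => //= lt_i1_n.
have lt_i_n := ltnW lt_i1_n.
by rewrite !nth_oneline ltn_perm_compl.
Qed.

Lemma is_des_compl p : is_des (perm_compl p) =1 is_asc p.
Proof. by move=> i; rewrite -is_asc_compl perm_complK. Qed.

Lemma asc_compl p : asc (perm_compl p) = des p.
Proof. exact: eq_count (is_asc_compl p) _. Qed.

Lemma des_compl p : des (perm_compl p) = asc p.
Proof. by rewrite -asc_compl perm_complK. Qed.

Lemma eq_nonadj (P Q : nat -> bool) : P =1 Q -> @nonadj n P =1 nonadj Q.
Proof.
move=> eqPQ I; rewrite /nonadj; congr (_ && _).
by apply: eq_forallb => i; rewrite eqPQ.
Qed.

Lemma MNA_compl p : MNA (perm_compl p) = MND p.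
Proof. exact/eq_bigl/eq_nonadj/is_asc_compl. Qed.

Lemma MND_compl p : MND (perm_compl p) = MNA p.
Proof. by rewrite -MNA_compl perm_complK. Qed.

Section ComplementaryPatterns.
Variables tau sigma : seq nat.
Hypothesis size_sigma : size sigma = size tau.
Hypothesis ltn_sigma : {in gtn (size tau) &, forall a b,
  (nth 0 sigma a < nth 0 sigma b) = (nth 0 tau b < nth 0 tau a)}.

Lemma contains_compl_of p : contains p tau -> contains (perm_compl p) sigma.
Proof.
case/existsP=> f /andP[/forallP f_incr /forallP f_pat].
apply/existsP; exists [ffun a => f (cast_ord size_sigma a)].
apply/andP; split; apply/forallP=> a; apply/forallP=> b; rewrite !ffunE.
- exact: (forallP (f_incr (cast_ord size_sigma a))).
- rewrite ltn_perm_compl (eqP (forallP (f_pat _) _)) /=.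
  by rewrite ltn_sigma // inE -size_sigma.
Qed.

End ComplementaryPatterns.

Lemma contains_compl p (tau sigma : seq nat) :
    size sigma = size tau ->
    {in gtn (size tau) &, forall a b,
      (nth 0 sigma a < nth 0 sigma b) = (nth 0 tau b < nth 0 tau a)} ->
  contains (perm_compl p) sigma = contains p tau.
Proof.
move=> size_sigma ltn_sigma; apply/idP/idP; last exact: contains_compl_of.
rewrite -{2}[p]perm_complK; apply: contains_compl_of => // a b.
by rewrite size_sigma => lt_a lt_b; rewrite ltn_sigma.
Qed.

Lemma Av213_231_compl p : (perm_compl p \in Av213_231 n) = (p \in Av213_231 n).
Proof.
have rev_213_231 : {in gtn 3 &, forall a b,
    (nth 0 [:: 2; 3; 1] a < nth 0 [:: 2; 3; 1] b)
    = (nth 0 [:: 2; 1; 3] b < nth 0 [:: 2; 1; 3] a)}.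
  by move=> [|[|[|?]]] [|[|[|?]]].
have rev_231_213 : {in gtn 3 &, forall a b,
    (nth 0 [:: 2; 1; 3] a < nth 0 [:: 2; 1; 3] b)
    = (nth 0 [:: 2; 3; 1] b < nth 0 [:: 2; 3; 1] a)}.
  by move=> [|[|[|?]]] [|[|[|?]]].
rewrite !inE /avoids.
rewrite (contains_compl p [:: 2; 3; 1] [:: 2; 1; 3] erefl rev_231_213).
by rewrite (contains_compl p [:: 2; 1; 3] [:: 2; 3; 1] erefl rev_213_231) andbC.
Qed.

End Complement.

Local Open Scope ring_scope.

Theorem theorem13 (R : comNzRingType) (n : nat) (t1 t2 t3 t4 : R) :
  \sum_(p in Av213_231 n)
     t1 ^+ asc p * t2 ^+ des p * t3 ^+ MNA p * t4 ^+ MND p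
  = \sum_(p in Av213_231 n)
     t1 ^+ des p * t2 ^+ asc p * t3 ^+ MND p * t4 ^+ MNA p.
Proof.
rewrite (reindex_inj (inv_inj (@perm_complK n))) /=.
apply: eq_big => p; first exact: Av213_231_compl.
by rewrite asc_compl des_compl MNA_compl MND_compl.
Qed.
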